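(* Let $G$ be an $\alpha_1$-metric graph. For every pair of vertices $s,t$ of $G$ with $d(s,t)\ge 4$ there exists a vertex $c\in I(s,t)\setminus\{s,t\}$ such that $e(c)<\max\{e(s),e(t)\}$.
   Context: All graphs are finite, connected, unweighted, undirected, simple; $d(u,v)$ is the shortest-path distance. $I(u,v)=\{x: d(u,x)+d(x,v)=d(u,v)\}$. A graph is $\alpha_1$-metric if for all vertices $u,v,w,x$: whenever $v\in I(u,w)$, $w\in I(v,x)$ and $v,w$ are adjacent, then $d(u,x)\ge d(u,v)+d(v,x)-1$. The eccentricity is $e(v)=\max_u d(u,v)$. *)

From mathcomp Require Import all_boot.
Set Implicit Arguments. Unset Strict Implicit. Unset Printing Implicit Defensive.

Section Graph.
Variable (T : finType) (e : rel T).

Fixpoint reachn (n : nat) (u v : T) : bool :=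
  match n with
  | 0 => u == v
  | n'.+1 => (u == v) || [exists w, e u w && reachn n' w v]
  end.

(* shortest-path distance: least n with a walk of length <= n
   (every distance in a connected graph is < #|T|) *)
Definition dist (u v : T) : nat := find (fun n => reachn n u v) (iota 0 #|T|).

Definition interval (u v : T) : {set T} :=
  [set x | dist u x + dist x v == dist u v].

Definition ecc (v : T) : nat := \max_(u : T) dist u v.

Definition simple_graph : Prop := symmetric e /\ irreflexive e.
Definition connected_graph : Prop := forall u v : T, connect e u v.

Definition alpha1_metric : Prop :=
  forall u v w x : T,
    v \in interval u w -> w \in interval v x -> e v w ->
    dist u v + dist v x - 1 <= dist u x.

End Graph.

From mathcomp Require Import all_boot zify.

Set Implicit Arguments. Unset Strict Implicit. Unset Printing Implicit Defensive.

(* Let M = max(e(s), e(t)).  In an alpha_1-metric graph, once a step v -> w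
   along a geodesic towards x moves away from u, the rest of the geodesic keeps
   moving away: d(u,x) >= d(u,w) + d(w,x) - 1.  Hence the neighbour s' of s
   on a geodesic to t has e(s') <= M, which reduces the theorem to d(s,t) = 4.
   There, call c a middle vertex if d(s,c) = d(c,t) = 2.  A vertex z with
   d(z,c) >= M is at distance exactly M from every vertex of every geodesic
   from s to t through c.  Stepping from c to a neighbour q closer to z keeps
   q in the middle layer and strictly shrinks the set of vertices at distance
   >= M; this uses that the first layer of I(s,t) is a clique and that
   alpha_1-metric graphs have no induced 4-cycle.  A middle vertex for which
   this set is smallest therefore has eccentricity < M. *)

Section Alpha1Graph.
Variables (T : finType) (e : rel T).
Hypothesis e_sym : symmetric e.
Hypothesis e_irr : irreflexive e.
Hypothesis e_conn : connected_graph e.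

Local Notation d := (dist e).

Lemma reachn_refl n u : reachn e n u u.
Proof. by case: n => [|n] /=; rewrite eqxx. Qed.

Lemma reachn_mono n m u v : n <= m -> reachn e n u v -> reachn e m u v.
Proof.
elim: n m u => [|n IH] m u /=; first by move=> _ /eqP ->; apply: reachn_refl.
case: m => [//|m] /= le_nm.
case/orP => [->//|/existsP [w /andP [euw r]]].
by apply/orP; right; apply/existsP; exists w; rewrite euw /= IH.
Qed.

Lemma reachn_trans m n u v w :
  reachn e m u v -> reachn e n v w -> reachn e (m + n) u w.
Proof.
elim: m u => [|m IH] u /=; first by move/eqP ->.
case/orP => [/eqP -> r|/existsP [x /andP [eux r]] r'].
  exact: reachn_mono (leq_addl m.+1 n) r.
by apply/orP; right; apply/existsP; exists x; rewrite eux /= IH.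
Qed.

Lemma reachn_sym n u v : reachn e n u v -> reachn e n v u.
Proof.
elim: n u => [|n IH] u /=; first by rewrite eq_sym.
case/orP => [/eqP ->|/existsP [w /andP [euw r]]]; first by rewrite eqxx.
have wu : reachn e 1 w u.
  by apply/orP; right; apply/existsP; exists u; rewrite eqxx andbT e_sym.
by have := reachn_trans (IH _ r) wu; rewrite addn1.
Qed.

Lemma path_reachn u p : path e u p -> reachn e (size p) u (last u p).
Proof.
elim: p u => [|x p IH] u /=; first by rewrite eqxx.
by case/andP => eux pp; apply/orP; right; apply/existsP; exists x; rewrite eux IH.
Qed.

(* A shortest walk visits each vertex once, so its length is below #|T|. *)
Lemma has_reachn u v : has (fun n => reachn e n u v) (iota 0 #|T|).
Proof.
have /connectP [p pp ->] := e_conn u v.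
have [p' pp' up' _] := shortenP pp.
apply/hasP; exists (size p'); last exact: path_reachn.
by rewrite mem_iota /=; have := max_card (mem (u :: p')); rewrite (card_uniqP up').
Qed.

Lemma dist_lt u v : d u v < #|T|.
Proof. by have := has_reachn u v; rewrite has_find size_iota. Qed.

Lemma reachn_dist u v : reachn e (d u v) u v.
Proof. by have := nth_find 0 (has_reachn u v); rewrite nth_iota ?dist_lt. Qed.

Lemma dist_leE n u v : (d u v <= n) = reachn e n u v.
Proof.
apply/idP/idP => [le_dn|r]; first exact: reachn_mono le_dn (reachn_dist u v).
have [le_Tn|lt_nT] := leqP #|T| n; first exact: ltnW (leq_trans (dist_lt u v) le_Tn).
rewrite leqNgt; apply/negP => lt_nd.
by have := before_find 0 lt_nd; rewrite nth_iota // r.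
Qed.

Lemma distC u v : d u v = d v u.
Proof.
have le_dC x y : d x y <= d y x by rewrite dist_leE reachn_sym ?reachn_dist.
by apply/eqP; rewrite eqn_leq !le_dC.
Qed.

Lemma dist_tri u v w : d u w <= d u v + d v w.
Proof. by rewrite dist_leE; apply: reachn_trans; apply: reachn_dist. Qed.

Lemma dist0E u v : (d u v == 0) = (u == v).
Proof. by rewrite -leqn0 dist_leE. Qed.

Lemma distxx u : d u u = 0.
Proof. by apply/eqP; rewrite dist0E. Qed.

Lemma dist_eq1 u v : (d u v == 1) = e u v.
Proof.
have [->|neq_uv] := eqVneq u v; first by rewrite distxx e_irr.
have d_gt0 : 0 < d u v by rewrite lt0n dist0E.
rewrite eqn_leq d_gt0 andbT dist_leE /= (negbTE neq_uv) /=.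
by apply/existsP/idP => [[w /andP [euw /eqP <-]]//|euv]; exists v; rewrite euv eqxx.
Qed.

Lemma dist_edge u v : e u v -> d u v = 1.
Proof. by rewrite -dist_eq1 => /eqP. Qed.

Lemma dist_step u v k : d u v = k.+1 -> exists2 w, e u w & d w v = k.
Proof.
move=> duv.
have := reachn_dist u v; rewrite duv /=.
have neq_uv : u != v by rewrite -dist0E duv.
rewrite (negbTE neq_uv) /= => /existsP [w /andP [euw r]].
exists w => //.
have := dist_tri u w v; rewrite -dist_leE in r; rewrite duv (dist_edge euw).
lia.
Qed.

Lemma dist2_nonadj u w v : e u w -> e w v -> u != v -> ~~ e u v -> d u v = 2.
Proof.
move=> euw ewv neq_uv nuv.
have := dist_tri u w v; rewrite (dist_edge euw) (dist_edge ewv).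
have : d u v != 0 by rewrite dist0E.
have : d u v != 1 by rewrite dist_eq1.
lia.
Qed.

Lemma dist_ecc u v : d u v <= ecc e v.
Proof. exact: (leq_bigmax (F := fun u => d u v)). Qed.

Lemma ecc_lt v M : (forall u, d u v < M) -> ecc e v < M.
Proof.
have T_gt0 : 0 < #|T| by apply/card_gt0P; exists v.
by rewrite /ecc; have [u ->] := eq_bigmax (fun u => d u v) T_gt0; apply.
Qed.

Lemma dist_interval_extend s s' t c : e s s' -> d s t = (d s' t).+1 ->
  c \in interval e s' t -> d s c = (d s' c).+1.
Proof.
rewrite inE => ss' st /eqP ci.
have := dist_tri s s' c; have := dist_tri s c t; rewrite (dist_edge ss').
lia.
Qed.

Hypothesis e_alpha1 : alpha1_metric e.

Lemma alpha1_step u v w x : e v w -> d u w = d u v + 1 -> d v x = d w x + 1 ->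
  d u v + d v x <= d u x + 1.
Proof.
move=> evw uvw vwx.
have dvw := dist_edge evw.
have : d u v + d v x - 1 <= d u x by apply: e_alpha1 evw; rewrite inE; apply/eqP; lia.
lia.
Qed.

Lemma C4_chord a b c x : e a b -> e b c -> e c x -> e x a -> a != c -> b != x ->
  e a c || e b x.
Proof.
move=> eab ebc ecx exa neq_ac neq_bx.
apply/negPn/negP; rewrite negb_or => /andP [nac nbx].
have dac := dist2_nonadj eab ebc neq_ac nac.
have dbx := dist2_nonadj ebc ecx neq_bx nbx.
have := alpha1_step ebc (_ : d a c = d a b + 1) (_ : d b x = d c x + 1).
rewrite dac dbx (dist_edge eab) (dist_edge ecx) (distC a x) (dist_edge exa); lia.
Qed.

Lemma geodesic_neighbors_adj s t a p : e s a -> e s p ->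
  d a t + 1 = d s t -> d p t + 1 = d s t -> a != p -> e a p.
Proof.
move=> sa sp at_ pt neq_ap; apply/negPn/negP => nap.
have as_ : e a s by rewrite e_sym.
have dap := dist2_nonadj as_ sp neq_ap nap.
have := alpha1_step as_ (_ : d t s = d t a + 1) (_ : d a p = d s p + 1).
rewrite !(distC t) dap (dist_edge sp); lia.
Qed.

Lemma ecc_geodesic_step s s' t : e s s' -> d s t = (d s' t).+1 -> 0 < d s' t ->
  ecc e s' <= maxn (ecc e s) (ecc e t).
Proof.
move=> ss' st s't_gt0; apply/bigmax_leqP => z _.
have zs := dist_ecc z s; have zt := dist_ecc z t.
have := dist_tri z s s'; rewrite (dist_edge ss') => zs'.
have [le_zs'|lt_zs] := leqP (d z s') (d z s); first by lia.
have := alpha1_step ss' (_ : d z s' = d z s + 1) (_ : d s t = d s' t + 1).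
lia.
Qed.

Section IntervalOfLengthFour.
Variables (s t : T) (M : nat).
Hypothesis st4 : d s t = 4.
Hypothesis hs : forall x, d x s <= M.
Hypothesis ht : forall x, d x t <= M.

Definition middle c := (d s c == 2) && (d c t == 2).

Definition far c := [set z | M <= d z c].

Lemma geodesic_plateau c p r z : d s c = 2 -> d c t = 2 ->
  e s p -> e p c -> e c r -> e r t -> M <= d z c ->
  [/\ d z s = M, d z p = M, d z c = M, d z r = M & d z t = M].
Proof.
move=> sc ct sp pc cr rt zc.
have dsp := dist_edge sp; have dpc := dist_edge pc.
have dcr := dist_edge cr; have drt := dist_edge rt.
have dpt : d p t = 3 by have := dist_tri p c t; have := dist_tri s p t; lia.
have dsr : d s r = 3 by have := dist_tri s c r; have := dist_tri s r t; lia.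
have zs := hs z; have zt := ht z.
have zsp := dist_tri z s p; have zps := dist_tri z p s.
have zpc := dist_tri z p c; have zcp := dist_tri z c p.
have zcr := dist_tri z c r; have zrc := dist_tri z r c.
have zrt := dist_tri z r t; have ztr := dist_tri z t r.
rewrite (distC p s) in zps; rewrite (distC c p) in zcp.
rewrite (distC r c) in zrc; rewrite (distC t r) in ztr.
have no_rise_pc : d z c != d z p + 1.
  apply/eqP => E; have := alpha1_step pc E (_ : d p t = d c t + 1); lia.
have no_rise_sp : d z p != d z s + 1.
  apply/eqP => E; have := alpha1_step sp E (_ : d s t = d p t + 1); lia.
have no_rise_rc : d z c != d z r + 1.
  apply/eqP => E; have rc : e r c by rewrite e_sym.
  have := alpha1_step rc E (_ : d r s = d c s + 1).
  rewrite (distC r s) (distC c s); lia.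
have no_rise_tr : d z r != d z t + 1.
  apply/eqP => E; have tr : e t r by rewrite e_sym.
  have := alpha1_step tr E (_ : d t s = d r s + 1).
  rewrite (distC t s) (distC r s); lia.
by split; lia.
Qed.

Lemma closer_neighbor_on_geodesic c z w : d s c = 2 -> d c t = 2 ->
  d z s = M -> d z c = M -> d z t = M -> e s w -> d z w + 1 = M -> d w t = 3.
Proof.
move=> sc ct zs zc zt sw zw.
have dsw := dist_edge sw.
have ws : e w s by rewrite e_sym.
have wst := dist_tri w s t; have swt := dist_tri s w t.
have wsc := dist_tri w s c; have wct := dist_tri w c t.
rewrite (distC w s) in wst wsc.
have wt_ne5 : d w t != 5.
  apply/eqP => E.
  have := alpha1_step ws (_ : d z s = d z w + 1) (_ : d w t = d s t + 1); lia.
have wc_ne3 : d w c != 3.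
  apply/eqP => E.
  have := alpha1_step ws (_ : d z s = d z w + 1) (_ : d w c = d s c + 1); lia.
have wt_ne4 : d w t != 4.
  apply/eqP => E.
  have wc : d w c = 2 by lia.
  have [x wx xc] := dist_step wc.
  have exc : e x c by rewrite -dist_eq1 xc.
  have dwx := dist_edge wx.
  have xt : d x t = 3 by have := dist_tri x c t; have := dist_tri w x t; lia.
  have := dist_tri z x c; have := dist_tri z w x.
  have [zx|zx] := eqVneq (d z x) M.
    have := alpha1_step wx (_ : d z x = d z w + 1) (_ : d w t = d x t + 1); lia.
  have := alpha1_step exc (_ : d z c = d z x + 1) (_ : d x t = d c t + 1); lia.
lia.
Qed.

Lemma closer_neighbor_middle c q z : d s c = 2 -> d c t = 2 -> d z c = M ->
  e c q -> d z q + 1 = M -> d s q = 2 /\ d q t = 2.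
Proof.
move=> sc ct zc cq zq.
have dcq := dist_edge cq.
have scq := dist_tri s c q; have qct := dist_tri q c t.
have sqt := dist_tri s q t.
rewrite (distC q c) in qct.
have zs := hs z; have zt := ht z.
have sq_ne3 : d s q != 3.
  apply/eqP => E.
  have := alpha1_step cq (_ : d s q = d s c + 1) (_ : d c z = d q z + 1).
  rewrite (distC c z) (distC q z) (distC s z); lia.
have qt_ne3 : d q t != 3.
  apply/eqP => E.
  have := alpha1_step cq (_ : d t q = d t c + 1) (_ : d c z = d q z + 1).
  rewrite (distC c z) (distC q z) (distC t z) (distC t q) (distC t c); lia.
lia.
Qed.

Lemma middle_edge_common_pred c q : d s c = 2 -> d c t = 2 -> d s q = 2 ->
  d q t = 2 -> e c q -> exists p, [/\ e s p, e p c & e p q].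
Proof.
move=> sc ct sq qt cq.
have [p sp pc] := dist_step sc; have [a sa aq] := dist_step sq.
have epc : e p c by rewrite -dist_eq1 pc.
have eaq : e a q by rewrite -dist_eq1 aq.
have [pq|npq] := boolP (e p q); first by exists p.
have [ac|nac] := boolP (e a c); first by exists a.
have neq_pa : p != a by apply: contraNneq npq => ->.
have pt : d p t + 1 = d s t.
  by have := dist_tri p c t; have := dist_tri s p t; rewrite (dist_edge sp); lia.
have at_ : d a t + 1 = d s t.
  by have := dist_tri a q t; have := dist_tri s a t; rewrite (dist_edge sa); lia.
have epa := geodesic_neighbors_adj sp sa pt at_ neq_pa.
have neq_pq : p != q by apply/eqP => E; move: sq; rewrite -E (dist_edge sp).
have neq_ca : c != a by apply/eqP => E; move: sc; rewrite E (dist_edge sa).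
have qa : e q a by rewrite e_sym.
have ap : e a p by rewrite e_sym.
have := C4_chord epc cq qa ap neq_pq neq_ca.
by rewrite (negbTE npq) (e_sym c a) (negbTE nac).
Qed.

(* w is the first vertex after s on a geodesic from s to z. *)
Lemma far_witness c q p z : d s c = 2 -> d c t = 2 -> d s q = 2 -> e c q ->
  e s p -> e p c -> e p q -> M <= d z c -> d z q < M ->
  exists w, [/\ e s w, d w t = 3, e w q & ~~ e w c].
Proof.
move=> sc ct sq cq sp pc pq zc zq.
have [r cr rt] := dist_step ct.
have ert : e r t by rewrite -dist_eq1 rt.
have [Zs Zp Zc _ Zt] := geodesic_plateau sc ct sp pc cr ert zc.
have zq1 : d z q + 1 = M.
  by have := dist_tri z q c; rewrite (distC q c) (dist_edge cq); lia.
have sz : d s z = (d z q).+1 by rewrite distC Zs -zq1 addn1.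
have [w sw wz] := dist_step sz.
have zw : d z w + 1 = M by rewrite distC wz.
have wt := closer_neighbor_on_geodesic sc ct Zs Zc Zt sw zw.
have pt : d p t + 1 = d s t.
  have := dist_tri p c t; have := dist_tri s p t.
  by rewrite (dist_edge sp) (dist_edge pc); lia.
have neq_wp : w != p by apply/eqP => E; move: zw; rewrite E Zp; lia.
have wt1 : d w t + 1 = d s t by rewrite wt st4.
have ewp := geodesic_neighbors_adj sw sp wt1 pt neq_wp.
exists w; split => //.
  apply/negPn/negP => nwq.
  have neq_wq : w != q by apply/eqP => E; move: sq; rewrite -E (dist_edge sw).
  have wq2 := dist2_nonadj ewp pq neq_wq nwq.
  have zpw : d z p = d z w + 1 by rewrite Zp zw.
  have wpq : d w q = d p q + 1 by rewrite wq2 (dist_edge pq).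
  have := alpha1_step ewp zpw wpq; rewrite wq2.
  by clear -zw zq1 zq; lia.
apply/negP => wc.
have [_ Zw _ _ _] := geodesic_plateau sc ct sw wc cr ert zc.
by clear -zw Zw; lia.
Qed.

Lemma far_subset c q p z : d s c = 2 -> d c t = 2 -> d s q = 2 -> d q t = 2 ->
  e c q -> e s p -> e p c -> e p q -> M <= d z c -> d z q < M ->
  far q \subset far c.
Proof.
move=> sc ct sq qt cq sp pc pq zc zq.
apply/subsetP => z'; rewrite !inE => z'q; rewrite leqNgt; apply/negP => z'c.
have qc : e q c by rewrite e_sym.
have [w [sw wt wq nwc]] := far_witness sc ct sq cq sp pc pq zc zq.
have [w' [sw' w't w'c nw'q]] := far_witness sq qt sc qc sp pq pc z'q z'c.
have neq_ww' : w != w' by apply: contraNneq nw'q => <-.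
have wt1 : d w t + 1 = d s t by rewrite wt st4.
have w't1 : d w' t + 1 = d s t by rewrite w't st4.
have ww' := geodesic_neighbors_adj sw sw' wt1 w't1 neq_ww'.
have neq_wc : w != c by apply/eqP => E; move: sc; rewrite -E (dist_edge sw).
have neq_qw' : q != w' by apply/eqP => E; move: sq; rewrite E (dist_edge sw').
have cw' : e c w' by rewrite e_sym.
have w'w : e w' w by rewrite e_sym.
have := C4_chord wq qc cw' w'w neq_wc neq_qw'.
by rewrite (negbTE nwc) (e_sym q w') (negbTE nw'q).
Qed.

Lemma far_shrink c z : d s c = 2 -> d c t = 2 -> z \in far c ->
  exists2 q, middle q & far q \proper far c.
Proof.
rewrite inE => sc ct zc.
have [p sp pc] := dist_step sc; have [r cr rt] := dist_step ct.
have epc : e p c by rewrite -dist_eq1 pc.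
have ert : e r t by rewrite -dist_eq1 rt.
have [_ _ Zc _ _] := geodesic_plateau sc ct sp epc cr ert zc.
have M_gt0 : 0 < M by apply: leq_trans (ht s); rewrite st4.
have cz : d c z = M.-1.+1 by rewrite distC Zc prednK.
have [q cq qz] := dist_step cz.
have zq : d z q + 1 = M by rewrite distC qz addn1 prednK.
have [sq qt] := closer_neighbor_middle sc ct Zc cq zq.
have [p' [sp' p'c p'q]] := middle_edge_common_pred sc ct sq qt cq.
have zq_lt : d z q < M by rewrite -zq addn1.
exists q; first by rewrite /middle sq qt.
apply/properP; split; first exact: far_subset sc ct sq qt cq sp' p'c p'q zc zq_lt.
by exists z; rewrite !inE ?zc // -ltnNge.
Qed.

Lemma middle_ecc_lt : exists c, [/\ d s c = 2, d c t = 2 & ecc e c < M].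
Proof.
have [p sp pt] := dist_step st4; have [c0 pc0 c0t] := dist_step pt.
have sc0 : d s c0 = 2.
  have := dist_tri s p c0; have := dist_tri s c0 t.
  by rewrite (dist_edge sp) (dist_edge pc0) c0t st4; lia.
have mid_c0 : middle c0 by rewrite /middle sc0 c0t.
case: (arg_minnP (P := middle) (fun c => #|far c|) mid_c0).
move=> c /andP [/eqP sc /eqP ct] c_min.
exists c; split => //; apply: ecc_lt => z; rewrite ltnNge.
apply/negP => zc.
have z_far : z \in far c by rewrite inE.
have [q mid_q far_qc] := far_shrink sc ct z_far.
by have := c_min q mid_q; rewrite leqNgt (proper_card far_qc).
Qed.

End IntervalOfLengthFour.

Lemma interval_ecc_drop k s t : d s t = k.+4 -> exists c,
  [/\ c \in interval e s t, c != s, c != t & ecc e c < maxn (ecc e s) (ecc e t)].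
Proof.
elim: k s => [|k IH] s st.
  have hs x : d x s <= maxn (ecc e s) (ecc e t).
    exact: leq_trans (dist_ecc x s) (leq_maxl _ _).
  have ht x : d x t <= maxn (ecc e s) (ecc e t).
    exact: leq_trans (dist_ecc x t) (leq_maxr _ _).
  have [c [sc ct hc]] := middle_ecc_lt st hs ht.
  exists c; split => //; first by rewrite inE sc ct st.
    by rewrite eq_sym -dist0E sc.
  by rewrite -dist0E ct.
have [s' ss' s't] := dist_step st.
have [c [ci neq_cs' neq_ct hc]] := IH s' s't.
have st' : d s t = (d s' t).+1 by rewrite st s't.
have sc := dist_interval_extend ss' st' ci.
exists c; split => //.
- by move: ci; rewrite !inE sc st' addSn.
- by rewrite eq_sym -dist0E sc.
- apply: leq_trans hc _; rewrite geq_max leq_maxr andbT.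
  by apply: ecc_geodesic_step; rewrite ?s't.
Qed.

End Alpha1Graph.

Theorem theorem7 (T : finType) (e : rel T) :
  simple_graph e -> connected_graph e -> alpha1_metric e ->
  forall s t : T, 4 <= dist e s t ->
  exists c : T, [/\ c \in interval e s t, c != s, c != t &
                   ecc e c < maxn (ecc e s) (ecc e t)].
Proof.
move=> [e_sym e_irr] e_conn e_alpha1 s t st4.
have [k st] : exists k, dist e s t = k.+4 by exists (dist e s t - 4); lia.
exact: interval_ecc_drop e_sym e_irr e_conn e_alpha1 k s t st.
Qed.
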